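(* For $n\ge1$ and $0\le k<n$, $$|\mathbf{I}_{n,k}(110)|=|\mathbf{I}_{n-1}(110)|-\sum_{j=k+1}^{n-3}|\mathbf{I}_{n-2,j}(110)|.$$
   Context: An inversion sequence of length $n$ is an integer sequence $e=e_1\dots e_n$ with $0\le e_i<i$ for all $i$; $\mathbf{I}_n$ denotes the set of these. The reduction of an integer word replaces every occurrence of its $i$-th smallest distinct value by $i-1$. $e$ contains the consecutive pattern $p$ of length $m$ if some $e_i\dots e_{i+m-1}$ has reduction $p$, and avoids it otherwise; $\mathbf{I}_n(p)$ is the set of $e\in\mathbf{I}_n$ avoiding $p$ (so avoiding $110$ means no $i$ with $e_i=e_{i+1}>e_{i+2}$). $\mathbf{I}_{n,k}(p)=\{e\in\mathbf{I}_n(p):e_n=k\}$, which is empty for $k\ge n$. Conventions: $|\mathbf{I}_0(p)|=1$ and $|\mathbf{I}_{n,j}(p)|=0$ whenever $n\le 0$ (as $j\ge n$) or $n<0$; empty sums are $0$. *)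

From mathcomp Require Import all_boot all_algebra.
Set Implicit Arguments. Unset Strict Implicit. Unset Printing Implicit Defensive.

(* Inversion sequences are represented as [seq nat]; position i (0-indexed)
   corresponds to e_{i+1}, so the condition 0 <= e_{i+1} < i+1 reads
   nth 0 e i < i.+1. *)
Definition is_invseq (n : nat) (e : seq nat) : bool :=
  (size e == n) && all (fun i => nth 0 e i < i.+1) (iota 0 n).

Definition reduction (w : seq nat) : seq nat :=
  [seq count (fun y => y < x) (undup w) | x <- w].

Definition contains_consec (p e : seq nat) : bool :=
  has (fun i => reduction (take (size p) (drop i e)) == p)
      (iota 0 (size e - size p).+1) && (size p <= size e).

Definition avoids (p e : seq nat) : bool := ~~ contains_consec p e.

(* All inversion sequences of length n, built by appending a last entry
   e_n in {0,...,n-1}; a list containing each element of I_n exactly once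
   (entries are filtered again by is_invseq below). *)
Fixpoint candidates (n : nat) : seq (seq nat) :=
  if n is m.+1 then
    flatten [seq [seq rcons e x | x <- iota 0 n] | e <- candidates m]
  else [:: [::]].

Definition cntI (p : seq nat) (n : nat) : nat :=
  count (fun e => is_invseq n e && avoids p e) (candidates n).

Definition cntIk (p : seq nat) (n k : nat) : nat :=
  count (fun e => [&& is_invseq n e, avoids p e & last 0 e == k])
        (candidates n).

Definition pat110 : seq nat := [:: 1; 1; 0].

Example ex1 : cntI pat110 3 = 6%N. Proof. by vm_compute. Qed.
Example ex2 : cntI pat110 0 = 1%N. Proof. by vm_compute. Qed.
Example ex3 : cntI pat110 4 = 23%N. Proof. by vm_compute. Qed.
Example ex4 : cntIk pat110 4 0 = 5%N. Proof. by vm_compute. Qed.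

From mathcomp Require Import all_boot all_algebra zify.
Import GRing.Theory.

Set Implicit Arguments.
Unset Strict Implicit.
Unset Printing Implicit Defensive.

(* Every e in I_{m+1} is [rcons e' x] with e' in I_m and
   x < m+1, and a consecutive 110 occurring in [rcons e' x] either occurs
   in e' or is formed by the last two entries of e' followed by x.  Hence

     |I_{m+1,k}(110)| = |I_m(110)| - #{e' in I_m(110) : e'_{m-1} = e'_m > k}.

   Writing such an e' once more as [rcons e'' y], the condition reads
   last e'' = y > k, and appending y = last e'' to an avoider e'' never
   creates a 110; so the subtracted term is the sum over j > k of
   |I_{m-1,j}(110)|. *)

Lemma contains_consec_rcons (p e : seq nat) (x : nat) :
  contains_consec p (rcons e x) =
  contains_consec p e ||
    (size p <= (size e).+1) && (reduction (drop ((size e).+1 - size p) (rcons e x)) == p).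
Proof.
rewrite /contains_consec size_rcons.
have [pe|ep|->] := ltngtP (size p) (size e).+1.
- rewrite ltnS in pe; rewrite pe !andbT -(subSn pe) -addn1 iotaD has_cat add0n has_seq1.
  rewrite take_oversize ?size_drop ?size_rcons; last by lia.
  congr (_ || _); apply: eq_in_has => i; rewrite mem_iota add0n => /andP[_ hi].
  rewrite drop_rcons; last by lia.
  by rewrite -cats1 takel_cat // size_drop; lia.
- by rewrite (ltn_geF (ltnW ep)) !andbF.
- by rewrite ltnn subnn !andbF /= drop0 take_oversize ?size_rcons // orbF andbT.
Qed.

Definition occ110 (a b c : nat) : bool := (a == b) && (c < b).

Lemma reduction_110 (a b c : nat) : (reduction [:: a; b; c] == pat110) = occ110 a b c.
Proof.
rewrite /reduction /occ110 /= !inE.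
have [ab|ab|eab] := ltngtP a b; have [bc|bc|ebc] := ltngtP b c;
  have [ac|ac|eac] := ltngtP a c; try lia; subst;
  rewrite ?eqxx ?(ltn_eqF ab) ?(gtn_eqF ab) ?(ltn_eqF bc) ?(gtn_eqF bc)
          ?(ltn_eqF ac) ?(gtn_eqF ac) /=;
  by rewrite ?ab ?bc ?ac ?(leq_gtF (ltnW ab)) ?(leq_gtF (ltnW bc))
             ?(leq_gtF (ltnW ac)) ?ltnn.
Qed.

Definition ends110 (e : seq nat) (x : nat) : bool :=
  (1 < size e) && occ110 (nth 0 e (size e).-2) (nth 0 e (size e).-1) x.

Lemma avoids110_rcons (e : seq nat) (x : nat) :
  avoids pat110 (rcons e x) = avoids pat110 e && ~~ ends110 e x.
Proof.
rewrite /avoids contains_consec_rcons negb_or /ends110; congr (_ && ~~ _).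
case: (ltnP 1 (size e)) => [e2|e1]; last by rewrite /= ltnS (leq_gtF e1).
have window : drop ((size e).+1 - 3) (rcons e x)
              = [:: nth 0 e (size e).-2; nth 0 e (size e).-1; x].
  have -> : (size e).+1 - 3 = (size e).-2 by lia.
  rewrite drop_rcons; last by lia.
  rewrite (drop_nth 0) ?(drop_nth 0 (n := (size e).-2.+1)); try lia.
  rewrite drop_oversize; last by lia.
  by rewrite /= (_ : (size e).-2.+1 = (size e).-1) //; lia.
by rewrite /= window reduction_110 ltnS e2.
Qed.

Lemma ends110_rcons (e : seq nat) (y x : nat) :
  ends110 (rcons e y) x = (0 < size e) && occ110 (last 0 e) y x.
Proof.
rewrite /ends110 size_rcons ltnS /= !nth_rcons ltnn eqxx.
by case: (size e) (nth_last 0 e) => [|s] //= ->; rewrite ltnSn.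
Qed.

Lemma ends110_last (e : seq nat) : ends110 e (last 0 e) = false.
Proof. by rewrite /ends110 /occ110 -nth_last ltnn !andbF. Qed.

Lemma is_invseq_rcons (n : nat) (e : seq nat) (x : nat) :
  is_invseq n.+1 (rcons e x) = is_invseq n e && (x < n.+1).
Proof.
rewrite /is_invseq size_rcons eqSS.
have [hs|] := eqVneq (size e) n; last by [].
rewrite -addn1 iotaD all_cat /= andbT; congr (_ && _).
  by apply: eq_in_all => i; rewrite mem_iota add0n nth_rcons hs => /andP[_ ->].
by rewrite add0n addn1 nth_rcons hs ltnn eqxx.
Qed.

Lemma invseq_last (n : nat) (e : seq nat) :
  is_invseq n e -> 0 < n -> last 0 e < n.
Proof.
case/andP=> /eqP size_e /allP entries n_gt0.
rewrite -nth_last size_e -[n in _ < n](ltn_predK n_gt0) entries //.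
by rewrite mem_iota add0n; lia.
Qed.

Definition inI110 (n : nat) (e : seq nat) : bool := is_invseq n e && avoids pat110 e.

Lemma inI110_rcons (n : nat) (e : seq nat) (x : nat) :
  inI110 n.+1 (rcons e x) = [&& inI110 n e, x < n.+1 & ~~ ends110 e x].
Proof.
rewrite /inI110 is_invseq_rcons avoids110_rcons.
by rewrite !andbA (andbAC (is_invseq n e)).
Qed.

Lemma cntIkE (n k : nat) :
  cntIk pat110 n k = count (fun e => inI110 n e && (last 0 e == k)) (candidates n).
Proof. by apply: eq_count => e; rewrite /inI110 andbA. Qed.

Lemma count_candidates_succ (F : pred (seq nat)) (n : nat) :
  count F (candidates n.+1) =
  \sum_(e <- candidates n) count (fun x => F (rcons e x)) (iota 0 n.+1).
Proof. by rewrite count_flatten sumnE !big_map; apply: eq_bigr => e _; rewrite count_map. Qed.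

Lemma count_sum_indicator (T : Type) (P : pred T) (s : seq T) :
  count P s = \sum_(x <- s) P x.
Proof. by rewrite -sum1_count big_mkcond. Qed.

Lemma count_uniq_eq (T : eqType) (P : pred T) (s : seq T) (k : T) :
  uniq s -> count (fun x => P x && (x == k)) s = (k \in s) && P k.
Proof.
move=> s_uniq; rewrite (eq_count (a2 := predI (pred1 k) P)); last first.
  by move=> x /=; rewrite andbC.
by rewrite -count_filter count_uniq_mem ?filter_uniq // mem_filter andbC.
Qed.

Lemma sum_count_fibres (T : Type) (P : pred T) (f : T -> nat) (s : seq T) (a b : nat) :
  \sum_(a <= j < b) count (fun e => P e && (f e == j)) s =
  count (fun e => P e && (a <= f e < b)) s.
Proof.
elim: s => [|e s IH] /=; first by rewrite big1.
rewrite big_split /= IH; congr (_ + _).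
case: (P e) => /=; last by rewrite big1.
rewrite -big_mkcond /= sum1_count (eq_count (a2 := pred1 (f e))); last by move=> j /=; rewrite eq_sym.
by rewrite count_uniq_mem ?iota_uniq // mem_index_iota.
Qed.

Lemma count_split (T : Type) (a b : pred T) (s : seq T) :
  count (fun x => a x && ~~ b x) s + count (fun x => a x && b x) s = count a s.
Proof.
rewrite -[RHS]size_filter -(count_predC b) !count_filter addnC.
by congr (_ + _); apply: eq_count => x /=; rewrite andbC.
Qed.

Lemma cntIk_succ (n k : nat) : k < n.+1 ->
  cntIk pat110 n.+1 k = count (fun e => inI110 n e && ~~ ends110 e k) (candidates n).
Proof.
move=> lt_k; rewrite cntIkE count_candidates_succ count_sum_indicator.
apply: eq_bigr => e _.
set P := fun x => inI110 n e && ~~ ends110 e x && (x < n.+1).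
rewrite (eq_count (a2 := fun x => P x && (x == k))); last first.
  by move=> x; rewrite /P /= inI110_rcons last_rcons !andbA (andbAC (inI110 n e)).
by rewrite count_uniq_eq ?iota_uniq // mem_iota add0n /P lt_k /= andbT.
Qed.

Lemma count_ends110 (n k : nat) :
  count (fun e => inI110 n e && ends110 e k) (candidates n) =
  \sum_(k.+1 <= j < n.-1) cntIk pat110 n.-1 j.
Proof.
case: n => [|r]; first by rewrite big_geq.
under eq_bigr do rewrite cntIkE.
rewrite sum_count_fibres /= count_candidates_succ count_sum_indicator.
apply: eq_bigr => e _.
set P := fun y => [&& inI110 r e, 0 < size e, k < y & y < r.+1].
rewrite (eq_count (a2 := fun y => P y && (y == last 0 e))); last first.
  move=> y; rewrite /P /= inI110_rcons ends110_rcons /occ110 eq_sym.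
  have [->|ne] := eqVneq y (last 0 e); last by rewrite !andbF.
  rewrite ends110_last.
  by case: (inI110 r e) (0 < size e) (k < last 0 e) (last 0 e < r.+1) => [] [] [] [].
rewrite (count_uniq_eq P) ?iota_uniq // mem_iota add0n /P.
have [inv_e|_] := boolP (inI110 r e); last by rewrite /= andbF.
have /andP[is_inv _] := inv_e; have /andP[/eqP size_e _] := is_inv.
have [r0|r_pos] := posnP r; first by move: size_e; rewrite r0 => /size0nil ->.
have last_lt := invseq_last is_inv r_pos.
by rewrite size_e r_pos last_lt ltnS (ltnW last_lt) /= andbT.
Qed.

Lemma cntI_decomposition (m k : nat) : k < m.+1 ->
  cntI pat110 m = cntIk pat110 m.+1 k + \sum_(k.+1 <= j < m.-1) cntIk pat110 m.-1 j.
Proof. by move=> lt_k; rewrite cntIk_succ // -count_ends110 count_split. Qed.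

Local Open Scope ring_scope.

Theorem mainTheorem10 (n k : nat) (hn : (1 <= n)%N) (hk : (k < n)%N) :
  (cntIk pat110 n k)%:Z =
    (cntI pat110 n.-1)%:Z - \sum_(k.+1 <= j < n - 2) (cntIk pat110 (n - 2) j)%:Z.
Proof.
case: n hn hk => [|m] // _ lt_k.
rewrite (cntI_decomposition lt_k) subSS subn1 PoszD.
by rewrite -(big_morph Posz PoszD (erefl 0%:Z)) addrK.
Qed.
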